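(* Let $d\ge1$ and let $M\subseteq\mathbb{R}^d$ be a multirectangle. Every element of order $2$ in $\operatorname{Rec}_d(M)$ is a product of rectangle transpositions with pairwise disjoint supports.
   Context: A rectangle in $\mathbb{R}^d$ is a set $\prod_{i=1}^d[a_i,b_i)$ with $a_i<b_i$ real numbers. A multirectangle is a finite union of rectangles. For a multirectangle $M\subseteq\mathbb{R}^d$, $\operatorname{Rec}_d(M)$ denotes the group, under composition, of all bijections $f:M\to M$ for which there exists a finite partition of $M$ into rectangles such that the restriction of $f$ to each piece is a translation. A rectangle transposition is, for two disjoint rectangles $P,Q\subseteq M$ with $Q=P+v$, the element $\tau_{P,Q}$ that is translation by $v$ on $P$, by $-v$ on $Q$, and the identity elsewhere; its support is $P\cup Q$. *)

From Stdlib Require Import Reals.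
From mathcomp Require Import all_boot.

Set Implicit Arguments.
Unset Strict Implicit.
Unset Printing Implicit Defensive.

Local Open Scope R_scope.

Definition point (d : nat) := 'I_d -> R.

Definition pset (d : nat) := point d -> Prop.

Definition vadd (d : nat) (x v : point d) : point d := fun i => x i + v i.
Definition vsub (d : nat) (x v : point d) : point d := fun i => x i - v i.

(* A rectangle is given by its corner vectors a, b : prod_i [a_i, b_i). *)
Definition box (d : nat) := (point d * point d)%type.

Definition box0 (d : nat) : box d := (fun _ => 0, fun _ => 0).

Definition box_ok (d : nat) (r : box d) : Prop := forall i, r.1 i < r.2 i.

Definition box_set (d : nat) (r : box d) : pset d :=
  fun x => forall i, r.1 i <= x i /\ x i < r.2 i.

Definition is_rectangle (d : nat) (P : pset d) : Prop :=
  exists r : box d, box_ok r /\ forall x, P x <-> box_set r x.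

Definition is_multirectangle (d : nat) (M : pset d) : Prop :=
  exists l : seq (box d), (forall r, List.In r l -> box_ok r) /\
    forall x, M x <-> exists2 r, List.In r l & box_set r x.

Definition rect_partition (d : nat) (M : pset d) (l : seq (box d)) : Prop :=
  (forall r, List.In r l -> box_ok r) /\
  (forall j k, (j < size l)%N -> (k < size l)%N -> j <> k ->
     forall x, ~ (box_set (nth (box0 d) l j) x /\ box_set (nth (box0 d) l k) x)) /\
  (forall x, M x <-> exists2 r, List.In r l & box_set r x).

(* f (restricted to M) is an element of Rec_d(M): a bijection M -> M which is
   a translation on each piece of some finite partition of M into rectangles.
   Values of f outside M are irrelevant. *)
Definition in_Rec (d : nat) (M : pset d) (f : point d -> point d) : Prop :=
  (forall x, M x -> M (f x)) /\
  (forall x y, M x -> M y -> f x = f y -> x = y) /\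
  (forall y, M y -> exists2 x, M x & f x = y) /\
  exists l : seq (box d), rect_partition M l /\
    forall r, List.In r l -> exists v : point d,
      forall x, box_set r x -> f x = vadd x v.

(* f has order exactly 2 in Rec_d(M) (equality of elements = equality on M). *)
Definition order_two (d : nat) (M : pset d) (f : point d -> point d) : Prop :=
  (forall x, M x -> f (f x) = x) /\ (exists x, M x /\ f x <> x).

Definition is_rect_transposition (d : nat) (M : pset d)
    (P Q : box d) (v : point d) (g : point d -> point d) : Prop :=
  box_ok P /\ box_ok Q /\
  (forall x, box_set P x -> M x) /\ (forall x, box_set Q x -> M x) /\
  (forall x, ~ (box_set P x /\ box_set Q x)) /\
  (forall y, box_set Q y <-> box_set P (vsub y v)) /\
  (forall x, box_set P x -> g x = vadd x v) /\
  (forall x, box_set Q x -> g x = vsub x v) /\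
  (forall x, ~ box_set P x -> ~ box_set Q x -> g x = x).

Definition tr_support (d : nat) (t : box d * box d) : pset d :=
  fun x => box_set t.1 x \/ box_set t.2 x.

Definition comp_list (d : nat) (gs : seq (point d -> point d)) : point d -> point d :=
  foldr (fun g h => fun x => g (h x)) (fun x => x) gs.

Definition tr0 (d : nat) : box d * box d * point d * (point d -> point d) :=
  (box0 d, box0 d, fun _ => 0, fun x => x).

(* Fix a partition of M into rectangles on each of which f is a translation by
   some vector v_j, and cut every cell C_j into the pieces
   P_jk = C_j ∩ (C_k - v_j) of points sent into C_k.  As f is an involution,
   f maps P_jk onto P_kj and v_k = -v_j whenever P_jk is nonempty, so for
   j < k the map f restricted to P_jk ∪ P_kj is the rectangle transposition
   swapping P_jk and P_kj, while on each diagonal piece P_jj it is the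
   identity.  Distinct pieces are disjoint, hence so are these transpositions,
   and f is their product. *)
From Stdlib Require Import Reals Lra ClassicalEpsilon FunctionalExtensionality.
From mathcomp Require Import all_boot.

Set Implicit Arguments.
Unset Strict Implicit.
Unset Printing Implicit Defensive.

Local Open Scope R_scope.

Definition asbool (P : Prop) : bool :=
  if excluded_middle_informative P then true else false.

Lemma asboolP (P : Prop) : reflect P (asbool P).
Proof. by rewrite /asbool; case: excluded_middle_informative => h; constructor. Qed.

Lemma seq_nth_In T (x0 : T) (s : seq T) i : (i < size s)%N -> List.In (nth x0 s i) s.
Proof. by elim: s i => [|a s IHs] [|i] //= lt_i; [left | right; apply: IHs]. Qed.

Lemma seq_In_nth T (x0 : T) (s : seq T) x :
  List.In x s -> exists2 i, (i < size s)%N & nth x0 s i = x.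
Proof.
elim: s => [|a s IHs] //= [-> | /IHs [i lt_i <-]]; first by exists 0%N.
by exists i.+1.
Qed.

Section Boxes.

Variable d : nat.
Implicit Types (r s : box d) (x y v w : point d).

Lemma vadd_vsub x v : vadd (vsub x v) v = x.
Proof. by apply: functional_extensionality => i; rewrite /vadd /vsub; lra. Qed.

Lemma vsub_vadd x v : vsub (vadd x v) v = x.
Proof. by apply: functional_extensionality => i; rewrite /vadd /vsub; lra. Qed.

Lemma vadd_opp x v w : (forall i, w i = - v i) -> vadd x w = vsub x v.
Proof. by move=> vw; apply: functional_extensionality => i; rewrite /vadd /vsub vw; lra. Qed.

Definition box_inter r s : box d :=
  (fun i => Rmax (r.1 i) (s.1 i), fun i => Rmin (r.2 i) (s.2 i)).

Definition box_shift r v : box d := (fun i => r.1 i - v i, fun i => r.2 i - v i).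

Lemma box_interP r s x : box_set (box_inter r s) x <-> box_set r x /\ box_set s x.
Proof.
rewrite /box_set /box_inter /=; split.
- by move=> h; split=> i; have := h i; rewrite /Rmax /Rmin;
    do 2 case: Rle_dec; lra.
- by move=> [hr hs] i; have := hr i; have := hs i; rewrite /Rmax /Rmin;
    do 2 case: Rle_dec; lra.
Qed.

Lemma box_shiftP r v x : box_set (box_shift r v) x <-> box_set r (vadd x v).
Proof. by rewrite /box_set /box_shift /vadd /=; split=> h i; have := h i; lra. Qed.

Lemma box_ok_mem r x : box_set r x -> box_ok r.
Proof. by move=> h i; have := h i; lra. Qed.

Lemma box_mem_corner r : box_ok r -> box_set r r.1.
Proof. by move=> h i; have := h i; lra. Qed.

End Boxes.

Section RectTranspositions.

Variables (d : nat) (M : pset d).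
Implicit Types (P Q : box d) (x v : point d).

Definition rect_swap P Q v x : point d :=
  if excluded_middle_informative (box_set P x) then vadd x v
  else if excluded_middle_informative (box_set Q x) then vsub x v else x.

Lemma rect_swap_transposition P Q v :
  box_ok P -> (forall x, box_set P x -> M x) -> (forall x, box_set Q x -> M x) ->
  (forall x, ~ (box_set P x /\ box_set Q x)) ->
  (forall y, box_set Q y <-> box_set P (vsub y v)) ->
  is_rect_transposition M P Q v (rect_swap P Q v).
Proof.
move=> okP PM QM PQ0 QE.
have okQ : box_ok Q.
  by apply: (@box_ok_mem _ _ (vadd P.1 v)); apply/QE; rewrite vsub_vadd; exact: box_mem_corner.
do 6 (split; first done); split; last split.
- by move=> x Px; rewrite /rect_swap; case: excluded_middle_informative.
- move=> x Qx; rewrite /rect_swap.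
  case: (excluded_middle_informative (box_set P x)) => [Px | nPx]; first by case: (PQ0 x).
  by case: excluded_middle_informative.
- move=> x nPx nQx; rewrite /rect_swap.
  by case: (excluded_middle_informative (box_set P x)); case: excluded_middle_informative.
Qed.

Definition rect_transpositions (ts : seq (box d * box d * point d * (point d -> point d))) :=
  forall t, List.In t ts -> is_rect_transposition M t.1.1.1 t.1.1.2 t.1.2 t.2.

Definition disjoint_supports (ts : seq (box d * box d * point d * (point d -> point d))) :=
  forall j k, (j < size ts)%N -> (k < size ts)%N -> j <> k ->
    forall x, ~ (tr_support (nth (tr0 d) ts j).1.1 x /\ tr_support (nth (tr0 d) ts k).1.1 x).

Lemma rect_transposition_fix t x :
  is_rect_transposition M t.1.1.1 t.1.1.2 t.1.2 t.2 -> ~ tr_support t.1.1 x -> t.2 x = x.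
Proof. by move=> [_ [_ [_ [_ [_ [_ [_ [_ tx]]]]]]]] nx; apply: tx => h; apply: nx; [left | right]. Qed.

Lemma rect_transposition_support t x :
  is_rect_transposition M t.1.1.1 t.1.1.2 t.1.2 t.2 ->
  tr_support t.1.1 x -> tr_support t.1.1 (t.2 x).
Proof.
move=> [_ [_ [_ [_ [_ [QE [tP [tQ _]]]]]]]] [Px | Qx].
- by right; rewrite tP //; apply/QE; rewrite vsub_vadd.
- by left; rewrite tQ //; apply/QE.
Qed.

Lemma disjoint_supports_behead t ts : disjoint_supports (t :: ts) -> disjoint_supports ts.
Proof. by move=> dts j k lt_j lt_k ne_jk; apply: (dts j.+1 k.+1) => // -[]. Qed.

Lemma comp_list_out ts x :
  rect_transpositions ts ->
  (forall i, (i < size ts)%N -> ~ tr_support (nth (tr0 d) ts i).1.1 x) ->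
  comp_list (map (fun t => t.2) ts) x = x.
Proof.
elim: ts => [|t ts IHts] //= tts out.
rewrite IHts; first by apply: (rect_transposition_fix (tts _ (or_introl erefl))); apply: (out 0%N).
- by move=> t' ts_t'; apply: tts; right.
- by move=> i; apply: (out i.+1).
Qed.

Lemma comp_list_in ts i x :
  rect_transpositions ts -> disjoint_supports ts -> (i < size ts)%N ->
  tr_support (nth (tr0 d) ts i).1.1 x ->
  comp_list (map (fun t => t.2) ts) x = (nth (tr0 d) ts i).2 x.
Proof.
elim: ts i => [|t ts IHts] // i tts dts.
have tts' : rect_transpositions ts by move=> t' ts_t'; apply: tts; right.
have tr_t := tts _ (or_introl erefl).
case: i => [|i] /= lt_i xi.
- rewrite comp_list_out // => k lt_k xk.
  by apply: (dts 0%N k.+1 isT lt_k _ x).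
- rewrite (IHts i) //; last exact: disjoint_supports_behead dts.
  apply: (rect_transposition_fix tr_t) => tx; apply: (dts 0%N i.+1 isT lt_i _ _ (conj tx _)) => //.
  exact: rect_transposition_support (tts' _ (seq_nth_In _ lt_i)) xi.
Qed.

End RectTranspositions.

(* Junk when f is not a translation on [r]. *)
Definition translation_on d (f : point d -> point d) (r : box d) : point d :=
  epsilon (inhabits (fun _ => 0)) (fun v => forall x, box_set r x -> f x = vadd x v).

Section InvolutionDecomposition.

Variables (d : nat) (M : pset d) (f : point d -> point d) (l : seq (box d)).
Hypothesis l_partition : rect_partition M l.
Hypothesis f_translation :
  forall r, List.In r l -> exists v, forall x, box_set r x -> f x = vadd x v.
Hypothesis f_M : forall x, M x -> M (f x).
Hypothesis f_involution : forall x, M x -> f (f x) = x.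

Local Notation cell j := (nth (box0 d) l j).

Definition cell_shift j := translation_on f (cell j).

Lemma f_cell j x : (j < size l)%N -> box_set (cell j) x -> f x = vadd x (cell_shift j).
Proof.
move=> lt_j; apply: (epsilon_spec _ (fun v => forall x, box_set (cell j) x -> f x = vadd x v)).
exact/f_translation/seq_nth_In.
Qed.

Lemma cell_M j x : (j < size l)%N -> box_set (cell j) x -> M x.
Proof. by move=> lt_j jx; apply/l_partition.2.2; exists (cell j); first exact: seq_nth_In. Qed.

Lemma cell_unique j k x :
  (j < size l)%N -> (k < size l)%N -> box_set (cell j) x -> box_set (cell k) x -> j = k.
Proof.
move=> lt_j lt_k jx kx; case: (eqVneq j k) => [// | /eqP ne_jk].
by case: (l_partition.2.1 j k lt_j lt_k ne_jk x).
Qed.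

Lemma M_cell x : M x -> exists2 j, (j < size l)%N & box_set (cell j) x.
Proof.
by case/l_partition.2.2 => r /(seq_In_nth (box0 d)) [j lt_j <-]; exists j.
Qed.

Definition piece j k := box_inter (cell j) (box_shift (cell k) (cell_shift j)).

Lemma pieceP j k x : (j < size l)%N ->
  box_set (piece j k) x <-> box_set (cell j) x /\ box_set (cell k) (f x).
Proof.
move=> lt_j; rewrite /piece box_interP box_shiftP.
by split=> -[jx kx]; split=> //; rewrite ?(f_cell lt_j jx) // -(f_cell lt_j jx).
Qed.

Lemma piece_unique j k j' k' x :
  (j < size l)%N -> (k < size l)%N -> (j' < size l)%N -> (k' < size l)%N ->
  box_set (piece j k) x -> box_set (piece j' k') x -> j = j' /\ k = k'.
Proof.
move=> lt_j lt_k lt_j' lt_k' /(pieceP _ _ lt_j) [jx kx] /(pieceP _ _ lt_j') [j'x k'x].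
by split; [apply: (cell_unique lt_j lt_j' jx) | apply: (cell_unique lt_k lt_k' kx)].
Qed.

Lemma piece_swap j k x : (j < size l)%N -> (k < size l)%N ->
  box_set (piece j k) x -> box_set (piece k j) (f x).
Proof.
move=> lt_j lt_k /(pieceP _ _ lt_j) [jx kx]; apply/(pieceP _ _ lt_k).
by rewrite f_involution //; exact: cell_M jx.
Qed.

Lemma cell_shift_opp j k x : (j < size l)%N -> (k < size l)%N ->
  box_set (piece j k) x -> forall i, cell_shift k i = - cell_shift j i.
Proof.
move=> lt_j lt_k /(pieceP _ _ lt_j) [jx kx] i.
have := f_involution (cell_M lt_j jx).
rewrite (f_cell lt_k kx) (f_cell lt_j jx) => /(f_equal (fun y => y i)).
by rewrite /vadd; lra.
Qed.

Lemma piece_diag_fixed j x : (j < size l)%N -> box_set (piece j j) x -> f x = x.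
Proof.
move=> lt_j jjx; have /(pieceP _ _ lt_j) [jx _] := jjx.
rewrite (f_cell lt_j jx); apply: functional_extensionality => i.
by have := cell_shift_opp lt_j lt_j jjx i; rewrite /vadd; lra.
Qed.

Definition swap_of (p : nat * nat) : box d * box d * point d * (point d -> point d) :=
  (piece p.1 p.2, piece p.2 p.1, cell_shift p.1,
   rect_swap (piece p.1 p.2) (piece p.2 p.1) (cell_shift p.1)).

(* [box_ok (piece j k)] just says that the piece is nonempty. *)
Definition swap_pairs : seq (nat * nat) :=
  [seq p <- [seq (j, k) | j <- iota 0 (size l), k <- iota 0 (size l)] |
     (p.1 < p.2)%N && asbool (box_ok (piece p.1 p.2))].

Definition swaps := map swap_of swap_pairs.

Lemma swap_pairsP j k :
  (j, k) \in swap_pairs <-> [/\ (j < k)%N, (k < size l)%N & box_ok (piece j k)].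
Proof.
rewrite mem_filter /=; split.
- case/andP=> /andP [lt_jk /asboolP ok] /allpairsP [[j' k'] [_ /=]].
  by rewrite mem_iota => /andP [_ lt_k] [ej ek]; subst.
- case=> lt_jk lt_k ok; rewrite lt_jk; apply/andP; split; first exact/asboolP.
  by apply/allpairsP; exists (j, k); rewrite !mem_iota /= (ltn_trans lt_jk lt_k).
Qed.

Lemma swap_pairs_uniq : uniq swap_pairs.
Proof.
apply/filter_uniq/allpairs_uniq; try exact: iota_uniq.
by move=> [? ?] [? ?] _ _ /= [-> ->].
Qed.

Lemma swap_of_transposition j k :
  (j, k) \in swap_pairs -> let t := swap_of (j, k) in
  is_rect_transposition M t.1.1.1 t.1.1.2 t.1.2 t.2.
Proof.
case/swap_pairsP=> lt_jk lt_k ok; have lt_j := ltn_trans lt_jk lt_k.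
have [x0 jk_x0] : exists x0, box_set (piece j k) x0 by exists (piece j k).1; exact: box_mem_corner.
have opp := cell_shift_opp lt_j lt_k jk_x0.
apply: rect_swap_transposition => //.
- by move=> x /(pieceP _ _ lt_j) [/(cell_M lt_j)].
- by move=> x /(pieceP _ _ lt_k) [/(cell_M lt_k)].
- move=> x [jkx kjx]; have [eq_jk _] := piece_unique lt_j lt_k lt_k lt_j jkx kjx.
  by rewrite eq_jk ltnn in lt_jk.
- move=> y; rewrite /piece !box_interP !box_shiftP vadd_vsub (vadd_opp _ opp).
  by split=> -[].
Qed.

Lemma swap_of_support_unique p p' x : p \in swap_pairs -> p' \in swap_pairs ->
  tr_support (swap_of p).1.1 x -> tr_support (swap_of p').1.1 x -> p = p'.
Proof.
case: p p' => [j k] [j' k'] /swap_pairsP [lt_jk lt_k _] /swap_pairsP [lt_jk' lt_k' _].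
have lt_j := ltn_trans lt_jk lt_k; have lt_j' := ltn_trans lt_jk' lt_k'.
have crossed : j = k' -> k = j' -> False.
  by move=> ej ek; subst; have := ltn_trans lt_jk lt_jk'; rewrite ltnn.
rewrite /tr_support /= => -[] x1 [] x2.
- by case: (piece_unique lt_j lt_k lt_j' lt_k' x1 x2) => -> ->.
- by case: (piece_unique lt_j lt_k lt_k' lt_j' x1 x2) => ej ek; case: (crossed ej ek).
- by case: (piece_unique lt_k lt_j lt_j' lt_k' x1 x2) => ek ej; case: (crossed ej ek).
- by case: (piece_unique lt_k lt_j lt_k' lt_j' x1 x2) => -> ->.
Qed.

Lemma swaps_transpositions : rect_transpositions M swaps.
Proof.
move=> t /(seq_In_nth (tr0 d)) [i]; rewrite size_map => lt_i <-.
rewrite (nth_map (0, 0)%N) //; case: (nth _ _ i) (mem_nth (0, 0)%N lt_i) => j k.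
exact: swap_of_transposition.
Qed.

Lemma swaps_disjoint : disjoint_supports swaps.
Proof.
move=> i i'; rewrite size_map => lt_i lt_i' ne_ii' x [xi xi'].
move: xi xi'; rewrite !(nth_map (0, 0)%N) // => xi xi'; apply: ne_ii'; apply/eqP.
rewrite -(nth_uniq (0, 0)%N lt_i lt_i' swap_pairs_uniq); apply/eqP.
exact: swap_of_support_unique (mem_nth _ lt_i) (mem_nth _ lt_i') xi xi'.
Qed.

Lemma swaps_index p : p \in swap_pairs ->
  exists2 i, (i < size swaps)%N & nth (tr0 d) swaps i = swap_of p.
Proof.
by move=> p_in; exists (index p swap_pairs); rewrite ?size_map ?index_mem //
  (nth_map (0, 0)%N) ?nth_index ?index_mem.
Qed.

Lemma f_eq_swaps x : M x -> f x = comp_list (map (fun t => t.2) swaps) x.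
Proof.
move=> Mx; have [j lt_j jx] := M_cell Mx; have [k lt_k kfx] := M_cell (f_M Mx).
have jkx : box_set (piece j k) x by apply/pieceP.
have comp_at p : p \in swap_pairs -> tr_support (swap_of p).1.1 x ->
    comp_list (map (fun t => t.2) swaps) x = (swap_of p).2 x.
  move=> p_in px; have [i lt_i ei] := swaps_index p_in.
  by rewrite (comp_list_in swaps_transpositions swaps_disjoint lt_i) ei.
case: (ltngtP j k) => [lt_jk | lt_kj | eq_jk].
- have jk_in : (j, k) \in swap_pairs by apply/swap_pairsP; split=> //; exact: box_ok_mem jkx.
  have [_ [_ [_ [_ [_ [_ [gP _]]]]]]] := swap_of_transposition jk_in.
  by rewrite (comp_at _ jk_in) ?gP ?(f_cell lt_j jx) //; left.
- have kjfx := piece_swap lt_j lt_k jkx.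
  have kj_in : (k, j) \in swap_pairs by apply/swap_pairsP; split=> //; exact: box_ok_mem kjfx.
  have [_ [_ [_ [_ [_ [_ [_ [gQ _]]]]]]]] := swap_of_transposition kj_in.
  rewrite (comp_at _ kj_in); last by right.
  by rewrite gQ // (f_cell lt_j jx) (vadd_opp _ (cell_shift_opp lt_k lt_j kjfx)).
- rewrite -eq_jk in jkx; rewrite (piece_diag_fixed lt_j jkx) (comp_list_out swaps_transpositions) //.
  move=> i; rewrite size_map => lt_i; rewrite (nth_map (0, 0)%N) //.
  case: (nth _ _ i) (mem_nth (0, 0)%N lt_i) => a b /swap_pairsP [lt_ab lt_b _].
  have lt_a := ltn_trans lt_ab lt_b.
  by case=> [abx | bax];
    [case: (piece_unique lt_a lt_b lt_j lt_j abx jkx) | case: (piece_unique lt_b lt_a lt_j lt_j bax jkx)]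
    => ea eb; move: lt_ab; rewrite ea eb ltnn.
Qed.

End InvolutionDecomposition.

Theorem mainTheorem5 (d : nat) (M : pset d) (f : point d -> point d) :
  (1 <= d)%N ->
  is_multirectangle M ->
  in_Rec M f ->
  order_two M f ->
  exists (ts : seq (box d * box d * point d * (point d -> point d))),
    (forall t, List.In t ts -> is_rect_transposition M t.1.1.1 t.1.1.2 t.1.2 t.2) /\
    (forall j k, (j < size ts)%N -> (k < size ts)%N -> j <> k ->
       forall x, ~ (tr_support (nth (tr0 d) ts j).1.1 x /\
                    tr_support (nth (tr0 d) ts k).1.1 x)) /\
    (forall x, M x -> f x = comp_list (map (fun t => t.2) ts) x).
Proof.
move=> _ _ [f_M [_ [_ [l [l_partition f_translation]]]]] [f_involution _].
exists (swaps f l); split; last split.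
- exact: swaps_transpositions l_partition f_translation f_involution.
- exact: swaps_disjoint l_partition f_translation.
- exact: f_eq_swaps l_partition f_translation f_M f_involution.
Qed.
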